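(* Let $\Gamma$ be a simplicial complex on $V_1=\{x_1,\ldots,x_n\}$ with $m$ facets. Let $G_1,\ldots,G_m\subseteq V_1$ be such that each $V_1\setminus G_j$ is a face of $\Gamma$ and every facet of $\Gamma$ is of the form $V_1\setminus G_j$ for some $j$. Let $y_1,\ldots,y_m$ be new vertices, let $\Delta_{V_1}$ be the $(n-1)$-simplex on $x_1,\ldots,x_n$, and define \[\Delta'=\left\{\sigma\cup\tau:\ \sigma\in\Gamma,\ \tau\subseteq\{y_j:\sigma\subseteq V_1\setminus G_j\}\right\},\qquad \Delta=\Delta'\cup\Delta_{V_1}.\] Let $I$ be the Stanley--Reisner ideal of $\Delta$ in $R=\Bbbk[x_1,\ldots,x_n,y_1,\ldots,y_m]$ ($\Bbbk$ a field), and let $I_\Gamma$ be the extension to $R$ of the Stanley--Reisner ideal of $\Gamma$ in $\Bbbk[x_1,\ldots,x_n]$. Then $I=(x_iy_j: 1\leq j\leq m,\ x_i\in G_j)$, $I=(I+I_\Gamma)\cap(y_1,\ldots,y_m)$, and the Stanley--Reisner ideal of $\Delta'$ is $I+I_\Gamma$.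
   Context: The Stanley--Reisner ideal of a simplicial complex $\Delta$ on a vertex set $V$ (the variables of a polynomial ring) is the ideal generated by the monomials $\prod_{x\in F}x$ for $F\subseteq V$ not a face of $\Delta$. *)

From HB Require Import structures.
From mathcomp Require Import all_boot all_order all_algebra.
From mathcomp Require Import mpoly.
Set Implicit Arguments. Unset Strict Implicit. Unset Printing Implicit Defensive.
Import GRing.Theory.
Local Open Scope ring_scope.

Definition is_simplicial_complex (T : finType) (D : {set {set T}}) : Prop :=
  set0 \in D /\ (forall F H : {set T}, F \in D -> H \subset F -> H \in D).

Definition facets (T : finType) (D : {set {set T}}) : {set {set T}} :=
  [set F in D | [forall H in D, (F \subset H) ==> (H == F)]].

Definition ideal_gen (R : comNzRingType) (S : R -> Prop) : R -> Prop :=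
  fun p => exists (k : nat) (a g : 'I_k -> R),
    (forall i, S (g i)) /\ p = \sum_(i < k) a i * g i.

Definition ideal_add (R : comNzRingType) (I J : R -> Prop) : R -> Prop :=
  ideal_gen (fun p => I p \/ J p).
Definition ideal_cap (R : comNzRingType) (I J : R -> Prop) : R -> Prop :=
  fun p => I p /\ J p.
Definition ideal_eq (R : comNzRingType) (I J : R -> Prop) : Prop :=
  forall p, I p <-> J p.

Definition sqfree_mono (K : fieldType) (N : nat) (F : {set 'I_N}) : {mpoly K[N]} :=
  \prod_(i in F) 'X_i.

Definition SR_ideal (K : fieldType) (N : nat) (D : {set {set 'I_N}}) :
    {mpoly K[N]} -> Prop :=
  ideal_gen (fun p => exists F : {set 'I_N}, F \notin D /\ p = sqfree_mono K F).

(* Vertices of R = k[x_1..x_n, y_1..y_m]: x_i is variable lshift m i,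
   y_j is variable rshift n j. *)
Definition xv (n m : nat) (i : 'I_n) : 'I_(n + m) := lshift m i.
Definition yv (n m : nat) (j : 'I_m) : 'I_(n + m) := rshift n j.

Definition incl_x (K : fieldType) (n m : nat) (p : {mpoly K[n]}) : {mpoly K[n + m]} :=
  p \mPo [tuple 'X_(@xv n m i) | i < n].

Definition ideal_ext (R S : comNzRingType) (f : R -> S) (I : R -> Prop) : S -> Prop :=
  ideal_gen (fun s => exists r, I r /\ s = f r).

Definition Delta' (n m : nat) (Gamma : {set {set 'I_n}}) (G : 'I_m -> {set 'I_n}) :
    {set {set 'I_(n + m)}} :=
  [set F : {set 'I_(n + m)} | [exists sigma in Gamma, exists tau : {set 'I_m},
      [forall j in tau, sigma \subset ~: G j] &&
      (F == (@xv n m @: sigma) :|: (@yv n m @: tau))]].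

Definition simplexV1 (n m : nat) : {set {set 'I_(n + m)}} :=
  powerset (@xv n m @: [set: 'I_n]).

Definition Delta (n m : nat) (Gamma : {set {set 'I_n}}) (G : 'I_m -> {set 'I_n}) :
    {set {set 'I_(n + m)}} :=
  Delta' Gamma G :|: simplexV1 n m.

From Pilot Require Import Defs.
From HB Require Import structures.
From mathcomp Require Import all_boot all_order all_algebra.
From mathcomp Require Import mpoly.
Local Open Scope ring_scope.
Import GRing.Theory.
Set Implicit Arguments. Unset Strict Implicit.

(* A polynomial lies in the Stanley--Reisner ideal of a subset-closed family D
   iff the support of each of its monomials is a non-face of D.  All three
   identities thus reduce to facts about non-faces.  Since V1 \ G_j is a face
   of Gamma, the non-faces of Delta are exactly the sets containing x_i and y_j
   with x_i in G_j, which gives the generators of I.  Since Delta is the union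
   of Delta' and the simplex on V1, whose Stanley--Reisner ideal contains
   (y_1, ..., y_m), I is the intersection of I_Delta' with (y_1, ..., y_m).
   Finally a non-face of Delta' either is a non-face of Delta or has an
   x-part that is a non-face of Gamma, so I_Delta' = I + I_Gamma. *)

Section IdealGen.
Variable R : comNzRingType.
Implicit Types (S T : R -> Prop) (p q : R).

Lemma ideal_gen_in S g : S g -> ideal_gen S g.
Proof.
by move=> Sg; exists 1%N, (fun=> 1), (fun=> g); rewrite big_ord1 mul1r.
Qed.

Lemma ideal_gen0 S : ideal_gen S 0.
Proof. by exists 0%N, (fun=> 0), (fun=> 0); split; [case | rewrite big_ord0]. Qed.

Lemma ideal_genD S p q : ideal_gen S p -> ideal_gen S q -> ideal_gen S (p + q).
Proof.
move=> [k1 [a1 [g1 [S1 ->]]]] [k2 [a2 [g2 [S2 ->]]]].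
exists (k1 + k2)%N,
  (fun i => match split i with inl j => a1 j | inr j => a2 j end),
  (fun i => match split i with inl j => g1 j | inr j => g2 j end).
split; first by move=> i; case: (split i).
rewrite big_split_ord /=; congr (_ + _); apply: eq_bigr => i _.
  by rewrite (unsplitK (inl i)).
by rewrite (unsplitK (inr i)).
Qed.

Lemma ideal_genMl S r p : ideal_gen S p -> ideal_gen S (r * p).
Proof.
move=> [k [a [g [Sg ->]]]]; exists k, (fun i => r * a i), g; split => //.
by rewrite mulr_sumr; apply: eq_bigr => i _; rewrite mulrA.
Qed.

Lemma ideal_gen_ind S (P : R -> Prop) :
    P 0 -> (forall p q, P p -> P q -> P (p + q)) ->
    (forall a g, S g -> P (a * g)) ->
  forall p, ideal_gen S p -> P p.
Proof.
move=> P0 PD PM p [k [a [g [Sg ->]]]].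
by elim/big_ind: _ => // i _; apply: PM.
Qed.

Lemma ideal_gen_sub S T :
  (forall g, S g -> ideal_gen T g) -> forall p, ideal_gen S p -> ideal_gen T p.
Proof.
move=> ST; apply: ideal_gen_ind; [exact: ideal_gen0 | exact: ideal_genD |].
by move=> a g /ST; apply: ideal_genMl.
Qed.

Lemma ideal_gen_sum S (I : Type) (s : seq I) (P : pred I) (F : I -> R) :
  (forall i, P i -> ideal_gen S (F i)) -> ideal_gen S (\sum_(i <- s | P i) F i).
Proof.
by move=> SF; apply: big_rec => [|i p /SF]; [exact: ideal_gen0 | apply: ideal_genD].
Qed.

End IdealGen.

Lemma ideal_gen_rmorph (R S : comNzRingType) (f : {rmorphism R -> S})
    (A : R -> Prop) (B : S -> Prop) :
  (forall g, A g -> ideal_gen B (f g)) -> forall p, ideal_gen A p -> ideal_gen B (f p).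
Proof.
move=> AB; apply: (@ideal_gen_ind _ _ (fun p => ideal_gen B (f p))).
- by rewrite rmorph0; apply: ideal_gen0.
- by move=> p q Bp Bq; rewrite rmorphD; apply: ideal_genD.
- by move=> a g /AB Bg; rewrite rmorphM; apply: ideal_genMl.
Qed.

Definition down_closed (T : finType) (D : {set {set T}}) : Prop :=
  forall F H : {set T}, F \in D -> H \subset F -> H \in D.

Section SquarefreeMonomialIdeals.
Variables (K : fieldType) (N : nat).
Implicit Types (p q : {mpoly K[N]}) (s t : 'X_{1..N}) (F A : {set 'I_N}).

Definition mnm_of_set F : 'X_{1..N} := (\sum_(i in F) U_(i))%MM.
Definition mnm_supp s : {set 'I_N} := [set i | (0 < s i)%N].

Lemma mnm_of_setE F i : mnm_of_set F i = (i \in F).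
Proof.
rewrite /mnm_of_set mnm_sumE; have [iF | iNF] := boolP (i \in F).
  rewrite (bigD1 i) //= mnm1E eqxx big1 ?addn0 // => j /andP [_ ji].
  by rewrite mnm1E (negbTE ji).
by rewrite big1 // => j jF; rewrite mnm1E; case: eqP => // ji; rewrite -ji jF in iNF.
Qed.

Lemma sqfree_monoE F : sqfree_mono K F = 'X_[mnm_of_set F].
Proof. by rewrite /sqfree_mono (big_morph _ (@mpolyXD _ _) (@mpolyX0 _ _)). Qed.

Lemma mnm_supp_of_set F : mnm_supp (mnm_of_set F) = F.
Proof. by apply/setP => i; rewrite inE mnm_of_setE; case: (i \in F). Qed.

Lemma mnm_of_set_le F s : F \subset mnm_supp s -> (mnm_of_set F <= s)%MM.
Proof.
move/subsetP => sub; apply/mnm_lepP => i; rewrite mnm_of_setE.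
by case: (boolP (i \in F)) => // /sub; rewrite inE.
Qed.

Lemma mnm_suppDr s t : mnm_supp t \subset mnm_supp (s + t)%MM.
Proof.
apply/subsetP => i; rewrite !inE mnmDE => ti.
exact: leq_trans ti (leq_addl _ _).
Qed.

Lemma mcoeffM_neq0 p q s : (p * q)@_s != 0 ->
  exists2 t, q@_t != 0 & mnm_supp t \subset mnm_supp s.
Proof.
rewrite mcoeffM; case: (pickP (fun k : 'X_{1..N < (mdeg s).+1, (mdeg s).+1} =>
  (s == (k.1 + k.2)%MM) && (q@_k.2 != 0))) => [k /andP [/eqP sk qk] _ | noneP].
  by exists k.2 => //; have := mnm_suppDr k.1 k.2; rewrite -sk.
rewrite big1 ?eqxx // => k /eqP sk.
by move: (noneP k); rewrite {1}sk eqxx /= => /negbFE /eqP ->; rewrite mulr0.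
Qed.

Lemma mcoeffX_neq0 s t : ('X_[s] : {mpoly K[N]})@_t != 0 -> t = s.
Proof. by rewrite mcoeffX; case: (eqVneq s t) => // _; rewrite eqxx. Qed.

Lemma ideal_gen_monomials (S : {mpoly K[N]} -> Prop) p :
    (forall s, p@_s != 0 -> exists2 t, S 'X_[t] & (t <= s)%MM) ->
  ideal_gen S p.
Proof.
move=> divS; rewrite [p]mpolyE big_seq; apply: ideal_gen_sum => s.
rewrite mcoeff_msupp => /divS [t St le_ts].
by rewrite -(submK le_ts) mpolyXD scalerAl; apply/ideal_genMl/ideal_gen_in.
Qed.

Lemma SR_idealP (D : {set {set 'I_N}}) p : down_closed D ->
  @SR_ideal K _ D p <-> (forall s, p@_s != 0 -> mnm_supp s \notin D).
Proof.
move=> Dcl; split => [|suppD].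
  apply: (@ideal_gen_ind _ _ (fun p => forall s, p@_s != 0 -> mnm_supp s \notin D))
    => [s | p1 p2 IH1 IH2 s | a g [F [FD ->]] s].
  - by rewrite mcoeff0 eqxx.
  - rewrite mcoeffD; have [p1s0 | /IH1 //] := eqVneq p1@_s 0.
    by rewrite p1s0 add0r; apply: IH2.
  - move=> /mcoeffM_neq0 [t]; rewrite sqfree_monoE => /mcoeffX_neq0 ->.
    by rewrite mnm_supp_of_set => sub; apply: contra FD => /Dcl; apply.
apply: ideal_gen_monomials => s /suppD sND.
exists (mnm_of_set (mnm_supp s)); last exact: mnm_of_set_le.
by exists (mnm_supp s); rewrite sqfree_monoE.
Qed.

Lemma SR_ideal_setU (D1 D2 : {set {set 'I_N}}) p :
    down_closed D1 -> down_closed D2 ->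
  @SR_ideal K _ (D1 :|: D2) p <-> @SR_ideal K _ D1 p /\ @SR_ideal K _ D2 p.
Proof.
move=> cl1 cl2; have cl12 : down_closed (D1 :|: D2).
  by move=> F H; rewrite !inE => /orP [/cl1|/cl2] cl /cl ->; rewrite ?orbT.
rewrite !SR_idealP //; split => [suppD | [supp1 supp2] s p_s].
  by split=> s /suppD; rewrite inE negb_or => /andP [].
by rewrite inE negb_or supp1 ?supp2.
Qed.

Lemma sqfree_mono_subset A F :
  A \subset F -> sqfree_mono K F = sqfree_mono K (F :\: A) * sqfree_mono K A.
Proof.
by move=> AF; rewrite /sqfree_mono (big_setID A) /= (setIidPr AF) mulrC.
Qed.

End SquarefreeMonomialIdeals.

Section Vertices.
Variables (n m : nat).
Local Notation xv := (@xv n m).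
Local Notation yv := (@yv n m).

Lemma xv_inj : injective xv.
Proof. by move=> i j /eqP; rewrite /Defs.xv eq_shift => /eqP. Qed.

Lemma yv_inj : injective yv.
Proof. by move=> i j /eqP; rewrite /Defs.yv eq_shift => /eqP. Qed.

Lemma xv_neq_yv i j : (xv i == yv j) = false.
Proof. exact: eq_lrshift. Qed.

Lemma yv_neq_xv i j : (yv j == xv i) = false.
Proof. exact: eq_rlshift. Qed.

Lemma xv_or_yv (k : 'I_(n + m)) : (exists i, k = xv i) \/ (exists j, k = yv j).
Proof.
by rewrite -(splitK k); case: (split k) => [i | j]; [left; exists i | right; exists j].
Qed.

Lemma yv_notin_imset_xv j (s : {set 'I_n}) : (yv j \in xv @: s) = false.
Proof. by apply/negP => /imsetP [i _ /eqP]; rewrite yv_neq_xv. Qed.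

Lemma xv_notin_imset_yv i (t : {set 'I_m}) : (xv i \in yv @: t) = false.
Proof. by apply/negP => /imsetP [j _ /eqP]; rewrite xv_neq_yv. Qed.

Lemma preimset_xv_imset (s : {set 'I_n}) : xv @^-1: (xv @: s) = s.
Proof. by apply/setP => i; rewrite inE (mem_imset _ _ xv_inj). Qed.

Lemma incl_x_sqfree_mono (K : fieldType) (s : {set 'I_n}) :
  incl_x m (sqfree_mono K s) = sqfree_mono K (xv @: s).
Proof.
rewrite /incl_x /sqfree_mono rmorph_prod (big_imset _ (in2W xv_inj)) /=.
by apply: eq_bigr => i _; rewrite comp_mpolyXU -tnth_nth tnth_mktuple.
Qed.

End Vertices.

Arguments xv_inj {n m}.
Arguments yv_inj {n m}.

Section Complexes.
Variables (n m : nat) (Gamma : {set {set 'I_n}}) (G : 'I_m -> {set 'I_n}).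
Local Notation xv := (@xv n m).
Local Notation yv := (@yv n m).

Lemma in_Delta'P (T : {set 'I_(n + m)}) :
  T \in Delta' Gamma G <->
  xv @^-1: T \in Gamma /\ (forall i j, xv i \in T -> yv j \in T -> i \notin G j).
Proof.
split.
  rewrite inE => /existsP [s /andP [sG /existsP [t /andP [/forallP tG /eqP ->]]]].
  have -> : xv @^-1: (xv @: s :|: yv @: t) = s.
    by apply/setP => i; rewrite !inE xv_notin_imset_yv orbF (mem_imset _ _ xv_inj).
  split => // i j.
  rewrite !inE xv_notin_imset_yv yv_notin_imset_xv orbF /=.
  rewrite (mem_imset _ _ xv_inj) (mem_imset _ _ yv_inj) => si jt.
  by move: (tG j); rewrite jt => /subsetP /(_ i si); rewrite inE.
move=> [TG TGc]; rewrite inE; apply/existsP; exists (xv @^-1: T).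
rewrite TG /=; apply/existsP; exists (yv @^-1: T); apply/andP; split.
  apply/forallP => j; apply/implyP; rewrite inE => jT.
  by apply/subsetP => i; rewrite !inE => iT; apply: TGc.
apply/eqP/setP => k; rewrite inE.
case: (xv_or_yv k) => [[i ->] | [j ->]].
  by rewrite xv_notin_imset_yv orbF (mem_imset _ _ xv_inj) inE.
by rewrite yv_notin_imset_xv (mem_imset _ _ yv_inj) inE.
Qed.

Lemma in_simplexV1P (T : {set 'I_(n + m)}) :
  T \in simplexV1 n m <-> (forall j, yv j \notin T).
Proof.
rewrite inE; split => [/subsetP sub j | noY].
  by apply/negP => /sub; rewrite yv_notin_imset_xv.
apply/subsetP => k; case: (xv_or_yv k) => [[i ->] | [j ->]] kT.
  by rewrite (mem_imset _ _ xv_inj) inE.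
by move: (noY j); rewrite kT.
Qed.

Lemma down_closed_simplexV1 : down_closed (simplexV1 n m).
Proof.
move=> F H /in_simplexV1P noY HF; apply/in_simplexV1P => j.
exact: contra (subsetP HF _) (noY j).
Qed.

Hypothesis Gamma_closed : down_closed Gamma.

Lemma down_closed_Delta' : down_closed (Delta' Gamma G).
Proof.
move=> F H /in_Delta'P [FG FGc] HF; apply/in_Delta'P; split.
  exact: Gamma_closed FG (preimsetS _ HF).
by move=> i j xi yj; apply: FGc; apply: (subsetP HF).
Qed.

Lemma down_closed_Delta : down_closed (Delta Gamma G).
Proof.
move=> F H; rewrite !in_setU => /orP [FD' | FS] HF.
  by rewrite (down_closed_Delta' FD' HF).
by rewrite (down_closed_simplexV1 FS HF) orbT.
Qed.

Lemma in_Delta'_simplexV1 (T : {set 'I_(n + m)}) :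
  xv @^-1: T \in Gamma -> T \in simplexV1 n m -> T \in Delta' Gamma G.
Proof.
move=> TG /in_simplexV1P noY; apply/in_Delta'P; split => // i j _ yj.
by move: (noY j); rewrite yj.
Qed.

Hypothesis complement_G_face : forall j, ~: G j \in Gamma.

(* A set containing some y_j but no edge x_i y_j with x_i in G_j lies in
   Delta', because its x-part is a face of the face V1 \ G_j. *)
Lemma notin_DeltaP (T : {set 'I_(n + m)}) :
  T \notin Delta Gamma G <->
  exists i j, [/\ i \in G j, xv i \in T & yv j \in T].
Proof.
rewrite inE negb_or; split => [/andP [TND' TNS] | [i [j [iG xi yj]]]]; last first.
  apply/andP; split.
    by apply/negP => /in_Delta'P [_ /(_ i j xi yj)]; rewrite iG.
  by apply/negP => /in_simplexV1P /(_ j); rewrite yj.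
have [j0 yj0] : exists j, yv j \in T.
  apply/existsP; apply: contraR TNS => /existsPn noY.
  by apply/in_simplexV1P => j; apply: noY.
suff /existsP [i /existsP [j /and3P edge]] :
    [exists i, exists j, [&& i \in G j, xv i \in T & yv j \in T]] by exists i, j.
apply: contraR TND' => /existsPn noEdge.
have TGc i j : xv i \in T -> yv j \in T -> i \notin G j.
  move=> xi yj; apply/negP => iG.
  by move: (noEdge i) => /existsPn /(_ j); rewrite iG xi yj.
apply/in_Delta'P; split => //; apply: Gamma_closed (complement_G_face j0) _.
by apply/subsetP => i; rewrite !inE => xi; apply: TGc xi yj0.
Qed.

End Complexes.

Section StanleyReisner.
Variables (K : fieldType) (n m : nat).
Variables (Gamma : {set {set 'I_n}}) (G : 'I_m -> {set 'I_n}).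
Hypothesis Gamma_closed : down_closed Gamma.
Hypothesis complement_G_face : forall j, ~: G j \in Gamma.
Local Notation xv := (@xv n m).
Local Notation yv := (@yv n m).
Let Delta_closed : down_closed (Delta Gamma G) := down_closed_Delta Gamma_closed.
Let Delta'_closed : down_closed (Delta' Gamma G) := down_closed_Delta' Gamma_closed.
Let nonface_DeltaP := notin_DeltaP (G:=G) Gamma_closed complement_G_face.
Local Notation I := (@SR_ideal K _ (Delta Gamma G)).
Local Notation I' := (@SR_ideal K _ (Delta' Gamma G)).
Local Notation IGamma := (ideal_ext (@incl_x K n m) (@SR_ideal K _ Gamma)).
Local Notation Y := (ideal_gen (fun p : {mpoly K[n + m]} => exists j, p = 'X_(yv j))).
Local Notation edge_ideal := (ideal_gen (fun p : {mpoly K[n + m]} =>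
  exists (i : 'I_n) (j : 'I_m), i \in G j /\ p = 'X_(xv i) * 'X_(yv j))).

Lemma SR_Delta_edge_ideal : ideal_eq I edge_ideal.
Proof.
move=> p; split; last first.
  apply: ideal_gen_sub => _ [i [j [iG ->]]]; apply/SR_idealP; first exact: Delta_closed.
  rewrite -mpolyXD => s /mcoeffX_neq0 ->; apply/nonface_DeltaP.
  by exists i, j; rewrite !inE !mnmDE !mnm1E !eqxx addn1.
move/SR_idealP => /(_ Delta_closed) suppND; apply: ideal_gen_monomials => s.
move=> /suppND /nonface_DeltaP [i [j [iG xi yj]]].
exists (U_(xv i) + U_(yv j))%MM; first by exists i, j; rewrite mpolyXD.
apply/mnm_lepP => k; rewrite mnmDE !mnm1E; move: xi yj; rewrite !inE.
case: (eqVneq (xv i) k) => [<- | _]; first by rewrite yv_neq_xv.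
by case: (eqVneq (yv j) k) => [<- | _].
Qed.

Lemma SR_Delta_cap_simplexV1 p : I p <-> I' p /\ @SR_ideal K _ (simplexV1 n m) p.
Proof.
apply: SR_ideal_setU; [exact: Delta'_closed | exact: down_closed_simplexV1].
Qed.

Lemma y_ideal_sub_SR_simplexV1 p : Y p -> @SR_ideal K _ (simplexV1 n m) p.
Proof.
apply: ideal_gen_sub => _ [j ->]; apply/SR_idealP; first exact: down_closed_simplexV1.
move=> s /mcoeffX_neq0 ->; apply/negP => /in_simplexV1P /(_ j).
by rewrite inE mnm1E eqxx.
Qed.

Lemma incl_x_SR_Gamma r : @SR_ideal K _ Gamma r -> I' (incl_x m r).
Proof.
apply: (@ideal_gen_rmorph _ _ (incl_x m)) => _ [F [FG ->]].
apply: ideal_gen_in; exists (xv @: F); split; last exact: incl_x_sqfree_mono.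
by apply/negP => /in_Delta'P []; rewrite preimset_xv_imset (negbTE FG).
Qed.

(* A non-face F of Delta' whose x-part is a face of Gamma is not contained in
   V1; otherwise the monomial of F is a multiple of that of its x-part. *)
Lemma SR_Delta'_sum : ideal_eq I' (ideal_add I IGamma).
Proof.
move=> p; split.
  apply: ideal_gen_sub => _ [F [FND' ->]].
  have [FG | FNG] := boolP (xv @^-1: F \in Gamma).
    apply/ideal_gen_in; left; apply/ideal_gen_in; exists F; split => //.
    rewrite in_setU negb_or FND' /=.
    by apply: contraNN FND'; apply: in_Delta'_simplexV1.
  have xF : xv @: (xv @^-1: F) \subset F.
    by apply/subsetP => _ /imsetP [i + ->]; rewrite inE.
  rewrite (sqfree_mono_subset K xF) -incl_x_sqfree_mono.
  apply/ideal_genMl/ideal_gen_in; right; apply: ideal_gen_in.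
  exists (sqfree_mono K (xv @^-1: F)); split => //.
  by apply: ideal_gen_in; exists (xv @^-1: F).
apply: ideal_gen_sub => g [/SR_Delta_cap_simplexV1 [] // | ].
apply: ideal_gen_sub => _ [r [Hr ->]]; exact: incl_x_SR_Gamma.
Qed.

Lemma SR_Delta_cap_y_ideal : ideal_eq I (ideal_cap (ideal_add I IGamma) Y).
Proof.
move=> p; split => [Ip | [/SR_Delta'_sum I'p /y_ideal_sub_SR_simplexV1 Sp]].
  split; first by apply/ideal_gen_in; left.
  move/SR_Delta_edge_ideal: Ip; apply: ideal_gen_sub => _ [i [j [_ ->]]].
  by apply/ideal_genMl/ideal_gen_in; exists j.
exact/SR_Delta_cap_simplexV1.
Qed.

End StanleyReisner.

Unset Implicit Arguments.

Theorem proposition4p5 (K : fieldType) (n m : nat)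
    (Gamma : {set {set 'I_n}}) (G : 'I_m -> {set 'I_n}) :
  is_simplicial_complex Gamma ->
  #|facets Gamma| = m ->
  (forall j, ~: G j \in Gamma) ->
  (forall F, F \in facets Gamma -> exists j, F = ~: G j) ->
  let I := @SR_ideal K _ (Delta Gamma G) in
  let IGamma := ideal_ext (@incl_x K n m) (@SR_ideal K _ Gamma) in
  let Y := ideal_gen (fun p : {mpoly K[n + m]} => exists j, p = 'X_(@yv n m j)) in
  [/\ ideal_eq I
        (ideal_gen (fun p : {mpoly K[n + m]} =>
           exists (i : 'I_n) (j : 'I_m), i \in G j /\ p = 'X_(@xv n m i) * 'X_(@yv n m j))),
      ideal_eq I (ideal_cap (ideal_add I IGamma) Y)
    & ideal_eq (@SR_ideal K _ (Delta' Gamma G)) (ideal_add I IGamma)].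
Proof.
move=> [_ Gamma_closed] _ complement_G_face _ I IGamma Y; split.
- exact: SR_Delta_edge_ideal.
- exact: SR_Delta_cap_y_ideal.
- exact: SR_Delta'_sum.
Qed.
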